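(* Let $s=\tfrac12$ and $\lambda\in\mathbb{C}$. The space of even superderivations of $\mathfrak{L}^{1/2}_\lambda$ of degree $0$ equals $$\mathrm{span}_{\mathbb{C}}\{\mathrm{ad}\,L_0,\ \mathrm{ad}\,I_0\}\oplus\mathbb{C}\,\partial_G\oplus\delta_{\lambda,0}\,\mathbb{C}\,\partial_D,$$ where the last summand is $\mathbb{C}\partial_D$ if $\lambda=0$ and $\{0\}$ if $\lambda\neq0$. In particular $\partial_G$ is a superderivation for every $\lambda$, and $\partial_D$ is a superderivation when $\lambda=0$.
   Context: For $s\in\{0,\tfrac12\}$ and $\lambda\in\mathbb{C}$, $\mathfrak{L}^s_\lambda$ is the complex Lie superalgebra with basis $\{L_m,I_m,G_p,H_p : m\in\mathbb{Z},\ p\in s+\mathbb{Z}\}$, even part spanned by the $L_m,I_m$, odd part spanned by the $G_p,H_p$, and brackets $[L_m,L_n]=(m-n)L_{m+n}$, $[L_m,I_n]=(m-n)I_{m+n}$, $[L_m,H_p]=(\tfrac m2-p)H_{m+p}$, $[L_m,G_p]=(\tfrac m2-p)G_{m+p}+\lambda(m+1)H_{m+p}$, $[I_m,G_p]=(m-2p)H_{m+p}$, $[G_p,G_q]=I_{p+q}$, plus those given by super-antisymmetry $[y,x]=-(-1)^{|x||y|}[x,y]$; all other brackets of basis elements are zero. $\mathfrak{L}_r$ is spanned by basis elements of index $r$. A superderivation of parity $a$ is a linear map $D$ shifting parity by $a$ with $D([x,y])=[D(x),y]+(-1)^{a|x|}[x,D(y)]$; it has degree $r$ if $D(\mathfrak{L}_q)\subset\mathfrak{L}_{q+r}$.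 $\mathrm{ad}\,x(y)=[x,y]$. The linear maps $\partial_G,\partial_D$ (called $\partial_4,\partial_3$ in the paper for $s=\tfrac12$) are defined by $\partial_G(L_m)=\partial_G(I_m)=\partial_G(H_p)=0$, $\partial_G(G_p)=H_p$; $\partial_D(L_m)=0$, $\partial_D(I_m)=2I_m$, $\partial_D(G_p)=G_p$, $\partial_D(H_p)=3H_p$. *)

From HB Require Import structures.
From mathcomp Require Import all_boot all_order all_algebra.
Set Implicit Arguments. Unset Strict Implicit. Unset Printing Implicit Defensive.
Import Order.TTheory GRing.Theory Num.Theory.
Local Open Scope ring_scope.

(* Basis of L^{1/2}_lambda.  bL m = L_m, bI m = I_m (m : int);
   bG n = G_{n+1/2}, bH n = H_{n+1/2} (n : int), i.e. p = n + 1/2. *)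
Inductive basis := bL of int | bI of int | bG of int | bH of int.

Definition basis_enc (b : basis) : nat * int :=
  match b with bL m => (0%N, m) | bI m => (1%N, m) | bG n => (2%N, n) | bH n => (3%N, n) end.
Definition basis_dec (x : nat * int) : basis :=
  match x with (0, m) => bL m | (1, m) => bI m | (2, m) => bG m | (_, m) => bH m end%N.
Lemma basis_encK : cancel basis_enc basis_dec. Proof. by case. Qed.
HB.instance Definition _ := Equality.copy basis (can_type basis_encK).

(* parity: false = even (L, I), true = odd (G, H) *)
Definition par (b : basis) : bool :=
  match b with bL _ | bI _ => false | bG _ | bH _ => true end.

Definition idx (b : basis) : rat :=
  match b with
  | bL m | bI m => m%:~R
  | bG n | bH n => n%:~R + 2^-1
  end.

(* Elements of the algebra: finite formal linear combinations of basis
   elements; two combinations are equal iff their coefficients agree. *)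
Definition vec (C : nzRingType) := seq (C * basis).
Definition coef (C : nzRingType) (v : vec C) (z : basis) : C :=
  \sum_(x <- v) x.1 * (x.2 == z)%:R.
Definition vscale (C : nzRingType) (k : C) (v : vec C) : vec C :=
  [seq (k * x.1, x.2) | x <- v].

(* Brackets of basis elements, as given in the paper (s = 1/2),
   completed by super-antisymmetry; all other brackets are 0. *)
Definition br (C : fieldType) (lam : C) (x y : basis) : vec C :=
  let hp (n : int) : C := n%:~R + 2^-1 in
  match x, y with
  | bL m, bL n => [:: ((m - n)%:~R, bL (m + n))]
  | bL m, bI n => [:: ((m - n)%:~R, bI (m + n))]
  | bI n, bL m => [:: (- (m - n)%:~R, bI (m + n))]
  | bL m, bH n => [:: (m%:~R / 2%:R - hp n, bH (m + n))]
  | bH n, bL m => [:: (- (m%:~R / 2%:R - hp n), bH (m + n))]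
  | bL m, bG n => [:: (m%:~R / 2%:R - hp n, bG (m + n));
                      (lam * (m%:~R + 1), bH (m + n))]
  | bG n, bL m => [:: (- (m%:~R / 2%:R - hp n), bG (m + n));
                      (- (lam * (m%:~R + 1)), bH (m + n))]
  | bI m, bG n => [:: (m%:~R - 2%:R * hp n, bH (m + n))]
  | bG n, bI m => [:: (- (m%:~R - 2%:R * hp n), bH (m + n))]
  | bG n1, bG n2 => [:: (1, bI (n1 + n2 + 1))]
  | _, _ => [::]
  end.

Definition brl (C : fieldType) (lam : C) (s t : vec C) : vec C :=
  flatten [seq vscale (x.1 * y.1) (br lam x.2 y.2) | x <- s, y <- t].

Definition lmap (C : nzRingType) := basis -> vec C.
Definition lapply (C : nzRingType) (D : lmap C) (v : vec C) : vec C :=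
  flatten [seq vscale x.1 (D x.2) | x <- v].
Definition lmap_eq (C : nzRingType) (D1 D2 : lmap C) : Prop :=
  forall b z, coef (D1 b) z = coef (D2 b) z.
Definition lzero (C : nzRingType) : lmap C := fun _ => [::].
Definition ladd (C : nzRingType) (D1 D2 : lmap C) : lmap C := fun b => D1 b ++ D2 b.
Definition lscale (C : nzRingType) (k : C) (D : lmap C) : lmap C := fun b => vscale k (D b).

Definition ad (C : fieldType) (lam : C) (x : basis) : lmap C := fun b => br lam x b.

(* superderivation of parity a (checked on basis elements, which are
   homogeneous; this is equivalent to the condition on all homogeneous
   elements by bilinearity). *)
Definition superder (C : fieldType) (lam : C) (a : bool) (D : lmap C) : Prop :=
  (forall b z, coef (D b) z != 0 -> par z = par b (+) a) /\
  (forall x y : basis,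
     forall z, coef (lapply D (br lam x y)) z =
       coef (brl lam (D x) [:: (1, y)] ++
             vscale ((-1) ^+ (a && par x)) (brl lam [:: (1, x)] (D y))) z).

Definition has_degree (C : nzRingType) (r : rat) (D : lmap C) : Prop :=
  forall b z, coef (D b) z != 0 -> idx z = idx b + r.

Definition dG (C : nzRingType) : lmap C := fun b =>
  match b with bG n => [:: (1, bH n)] | _ => [::] end.
Definition dD (C : nzRingType) : lmap C := fun b =>
  match b with
  | bL _ => [::]
  | bI m => [:: (2%:R, bI m)]
  | bG n => [:: (1, bG n)]
  | bH n => [:: (3%:R, bH n)]
  end.
Arguments dG {C}.
Arguments dD {C}.
Arguments lzero {C}.

(* An even superderivation of degree 0 maps every basis element to a
   combination of the two basis elements of the same parity and index, so it is
   given by eight functions of the index ([deg0_map]).  The derivation identity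
   on brackets of basis elements becomes a system of functional equations over
   Z: [L_m, L_n] makes the coefficients of D(L_m) additive off the diagonal,
   hence linear in m, and the remaining brackets force every other coefficient
   to be affine with slopes determined by those of D(L_m).  What is left free is
   an inner part (ad L_0, ad I_0), the constant term of the H-coefficient of
   D(G_p) (giving partial_G) and the value h(0) of the I-coefficient of D(I_0),
   on which [L_1, G_{1/2}] imposes lam * h(0) = 0 (giving partial_D). *)

From mathcomp Require Import all_boot all_order all_algebra.
From mathcomp Require Import ring zify.

Set Implicit Arguments. Unset Strict Implicit. Unset Printing Implicit Defensive.
Import Order.TTheory GRing.Theory Num.Theory.
Local Open Scope ring_scope.

Section LinearExtension.
Variable C : fieldType.

Definition linext (F : basis -> C) (v : vec C) : C := \sum_(x <- v) x.1 * F x.2.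

Lemma coef_linext (v : vec C) z : coef v z = linext (fun w => (w == z)%:R) v.
Proof. by []. Qed.

Lemma linext_cat F (v w : vec C) : linext F (v ++ w) = linext F v + linext F w.
Proof. by rewrite /linext big_cat. Qed.

Lemma linext_vscale F k (v : vec C) : linext F (vscale k v) = k * linext F v.
Proof.
rewrite /linext big_map mulr_sumr.
by apply: eq_bigr => x _; rewrite mulrA.
Qed.

Lemma linext_seq1 F k w : linext F [:: (k, w)] = k * F w.
Proof. by rewrite /linext big_seq1. Qed.

Lemma linext_flatten F (vs : seq (vec C)) :
  linext F (flatten vs) = \sum_(v <- vs) linext F v.
Proof. by rewrite /linext big_flatten. Qed.

Lemma coef_cat (v w : vec C) z : coef (v ++ w) z = coef v z + coef w z.
Proof. by rewrite !coef_linext linext_cat. Qed.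

Lemma coef_vscale k (v : vec C) z : coef (vscale k v) z = k * coef v z.
Proof. by rewrite !coef_linext linext_vscale. Qed.

Lemma coef_lapply (D : lmap C) v z :
  coef (lapply D v) z = linext (fun w => coef (D w) z) v.
Proof.
rewrite /lapply coef_linext linext_flatten big_map [RHS]/linext.
by apply: eq_bigr => x _; rewrite linext_vscale.
Qed.

Lemma coef_brl lam (s t : vec C) z :
  coef (brl lam s t) z = linext (fun w => linext (fun u => coef (br lam w u) z) t) s.
Proof.
rewrite /brl coef_linext linext_flatten big_allpairs_dep [RHS]/linext.
apply: eq_bigr => x _; rewrite [in RHS]/linext mulr_sumr.
by apply: eq_bigr => y _; rewrite linext_vscale -coef_linext mulrA.
Qed.

Lemma linext_support F (v : vec C) (U : seq basis) :
  uniq U -> all (fun x => x.2 \in U) v -> linext F v = \sum_(z <- U) coef v z * F z.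
Proof.
move=> uU; elim: v => [_ | x v IH /andP[xU /IH {}IH]].
  by rewrite /linext big_nil big1 // => z _; rewrite /coef big_nil mul0r.
rewrite /linext big_cons -/(linext F v) IH.
rewrite [RHS](eq_bigr (fun z => x.1 * (x.2 == z)%:R * F z + coef v z * F z)) => [|z _];
  last by rewrite /coef big_cons mulrDl.
rewrite big_split /=; congr (_ + _).
rewrite (bigD1_seq x.2) //= eqxx mulr1 big1 ?addr0 // => z.
by rewrite eq_sym => /negbTE ->; rewrite mulr0 mul0r.
Qed.

Lemma eq_linext_coef F (v w : vec C) :
  (forall z, coef v z = coef w z) -> linext F v = linext F w.
Proof.
move=> e; set U := undup (map snd (v ++ w)).
have inU s : {subset s <= v ++ w} -> all (fun x => x.2 \in U) s.
  by move=> sub; apply/allP => x /sub xs; rewrite mem_undup map_f.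
rewrite (@linext_support F v U) ?(@linext_support F w U) ?undup_uniq //.
- by apply: eq_bigr => z _; rewrite e.
- by apply: inU => x xw; rewrite mem_cat xw orbT.
- by apply: inU => x xv; rewrite mem_cat xv.
Qed.

Lemma lmap_eq_sym (D1 D2 : lmap C) : lmap_eq D1 D2 -> lmap_eq D2 D1.
Proof. by move=> e b z; rewrite e. Qed.

Lemma lmap_eq_trans (D1 D2 D3 : lmap C) :
  lmap_eq D1 D2 -> lmap_eq D2 D3 -> lmap_eq D1 D3.
Proof. by move=> e1 e2 b z; rewrite e1 e2. Qed.

Lemma superder_lmap_eq lam a (D D' : lmap C) :
  lmap_eq D D' -> superder lam a D -> superder lam a D'.
Proof.
move=> e [Dpar Dbr]; split=> [b z | x y z]; first by rewrite -e; apply: Dpar.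
have eqF F w : linext F (D w) = linext F (D' w) by apply: eq_linext_coef; apply: e.
move: (Dbr x y z); rewrite !coef_cat !coef_vscale !coef_lapply !coef_brl.
rewrite !linext_seq1 !eqF => <-.
by apply: eq_bigr => w _; rewrite e.
Qed.

Lemma has_degree_lmap_eq r (D D' : lmap C) :
  lmap_eq D D' -> has_degree r D -> has_degree r D'.
Proof. by move=> e H b z; rewrite -e; apply: H. Qed.

Lemma lscale0 (D : lmap C) : lmap_eq (lscale 0 D) lzero.
Proof. by move=> b z; rewrite coef_vscale mul0r /coef big_nil. Qed.

Lemma ladd_eq0 (D1 D2 : lmap C) :
  lmap_eq D1 lzero -> lmap_eq D2 lzero -> lmap_eq (ladd D1 D2) lzero.
Proof. by move=> e1 e2 b z; rewrite coef_cat e1 e2 /coef big_nil addr0. Qed.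

End LinearExtension.

Lemma eq_basisE (x y : basis) : (x == y) = (basis_enc x == basis_enc y).
Proof. by []. Qed.

Ltac coef_simpl := rewrite /coef ?big_cons ?big_nil /= ?eq_basisE /= ?xpair_eqE /=.

Section DegreeZeroEven.
Variable C : fieldType.

Definition deg0_map (f g k h al be ga de : int -> C) : lmap C := fun b =>
  match b with
  | bL m => [:: (f m, bL m); (g m, bI m)]
  | bI m => [:: (k m, bL m); (h m, bI m)]
  | bG n => [:: (al n, bG n); (be n, bH n)]
  | bH n => [:: (ga n, bG n); (de n, bH n)]
  end.

Lemma deg0_map_ext (f g k h al be ga de f' g' k' h' al' be' ga' de' : int -> C) :
  f =1 f' -> g =1 g' -> k =1 k' -> h =1 h' ->
  al =1 al' -> be =1 be' -> ga =1 ga' -> de =1 de' ->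
  lmap_eq (deg0_map f g k h al be ga de) (deg0_map f' g' k' h' al' be' ga' de').
Proof.
by move=> ef eg ek eh eal ebe ega ede [] m z /=;
  rewrite ?ef ?eg ?ek ?eh ?eal ?ebe ?ega ?ede.
Qed.

Lemma even_deg0_map (D : lmap C) :
  (forall b z, coef (D b) z != 0 -> par z = par b (+) false) -> has_degree 0 D ->
  lmap_eq D (deg0_map (fun m => coef (D (bL m)) (bL m)) (fun m => coef (D (bL m)) (bI m))
                      (fun m => coef (D (bI m)) (bL m)) (fun m => coef (D (bI m)) (bI m))
                      (fun n => coef (D (bG n)) (bG n)) (fun n => coef (D (bG n)) (bH n))
                      (fun n => coef (D (bH n)) (bG n)) (fun n => coef (D (bH n)) (bH n))).
Proof.
move=> Dpar Ddeg b z.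
have int_idx m j : (j%:~R : rat) = m%:~R + 0 -> m = j.
  by rewrite addr0 => /intr_inj.
have half_idx m j : (j%:~R + 2^-1 : rat) = (m%:~R + 2^-1) + 0 -> m = j.
  by rewrite addr0 => /addIr /intr_inj.
case: b => m; case: z => j /=; rewrite [in RHS]/coef ?big_cons ?big_nil /= ?eq_basisE /=;
  rewrite ?xpair_eqE /=; try (case: (eqVneq m j) => [<-|nmj]);
  rewrite ?eqxx ?mulr1 ?mulr0 ?addr0 ?add0r ?(negbTE nmj) ?mulr0 ?addr0 //;
  apply/eqP; apply/negPn/negP => /[dup] /Dpar // _ /Ddeg /=.
all: first [move/int_idx | move/half_idx]; by move/eqP: nmj.
Qed.

End DegreeZeroEven.

Section IntFunctionalEquations.
Variable C : idomainType.

Lemma eq_of_scaled_diff (c X Y P Q : C) :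
  c != 0 -> P - Q = c * (X - Y) -> P = Q -> X = Y.
Proof.
move=> nc eqPQ /eqP.
by rewrite -subr_eq0 eqPQ mulf_eq0 (negbTE nc) subr_eq0 => /eqP.
Qed.

Lemma int_arith_prog (F : int -> C) c :
  (forall k, F (k + 1) = F k + c) -> forall n, F n = F 0 + n%:~R * c.
Proof.
move=> step; case=> p.
  elim: p => [|p IH]; first by rewrite mul0r addr0.
  by rewrite -addn1 PoszD step IH intrD mulrDl mul1r addrA.
rewrite NegzE; elim: p => [|p IH].
  by have := step (-1); rewrite addNr => ->; rewrite mulN1r addrK.
have := step (- Posz p.+2); rewrite (_ : - Posz p.+2 + 1 = - Posz p.+1); last by lia.
rewrite IH => /eqP; rewrite -subr_eq => /eqP <-.
rewrite (_ : - Posz p.+2 = - Posz p.+1 - 1); last by lia.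
rewrite intrD; ring.
Qed.

(* Only sums of distinct arguments are additive: this is what the bracket
   [L_m, L_n] = (m - n) L_{m+n} yields. *)
Lemma additive_off_diag (F : int -> C) :
  (forall m n, m != n -> F (m + n) = F m + F n) -> forall x, F x = x%:~R * F 1.
Proof.
move=> Fadd.
have F0 : F 0 = 0 by apply: (addrI (F 1)); rewrite -Fadd // !addr0.
have Fm1 : F (-1) = - F 1 by apply: (addrI (F 1)); rewrite -Fadd // !subrr F0.
have Fstep k : F (k + 1) = F k + F 1.
  have [->|nk] := eqVneq k 1; last exact: Fadd.
  by apply/eqP; have := Fadd 2 (-1) isT; rewrite Fm1 => /eqP; rewrite eq_sym subr_eq.
by move=> x; rewrite (int_arith_prog Fstep) F0 add0r.
Qed.

End IntFunctionalEquations.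

Lemma intr_add_half_neq0 (C : numFieldType) (n : int) : (n%:~R + 2^-1 : C) != 0.
Proof.
have -> : (n%:~R + 2^-1 : C) = (2 * n + 1)%:~R / 2 by rewrite intrD intrM /=; field.
by rewrite mulf_eq0 invr_eq0 pnatr_eq0 orbF intr_eq0; apply/eqP; lia.
Qed.

Ltac cancel_by c nz E :=
  first [ apply: (eq_of_scaled_diff nz _ E); by field
        | apply: (eq_of_scaled_diff (c := - c) _ _ E); [by rewrite oppr_eq0 | by field] ].

Ltac case_index_eq j := repeat match goal with |- context [?e == j] =>
  case: (eqVneq e j) => [<-|/negbTE ->] end.

Definition halfint (C : numFieldType) (n : int) : C := n%:~R + 2^-1.

Section Combination.
Variables (C : numFieldType) (lam a b c d : C).

Definition comb : lmap C :=
  ladd (ladd (lscale a (ad lam (bL 0))) (lscale b (ad lam (bI 0))))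
       (ladd (lscale c dG) (lscale d dD)).

Definition comb_map : lmap C :=
  deg0_map (fun m => - a * m%:~R) (fun m => - b * m%:~R) (fun _ => 0)
           (fun m => - a * m%:~R + 2 * d) (fun n => - a * halfint C n + d)
           (fun n => a * lam - 2 * b * halfint C n + c) (fun _ => 0)
           (fun n => - a * halfint C n + 3 * d).

Lemma combE : lmap_eq comb comb_map.
Proof.
move=> x z; rewrite /comb /ladd /lscale /ad !coef_cat !coef_vscale.
case: x => m; case: z => j; coef_simpl; rewrite ?add0r ?addr0; case_index_eq j;
  rewrite ?eqxx /= /halfint; by field.
Qed.

Lemma comb_map_degree : has_degree 0 comb_map.
Proof.
move=> x z; case: x => m; case: z => j; coef_simpl; rewrite ?mulr0 ?addr0 ?eqxx //;
  by case: (eqVneq m j) => [->|nmj]; rewrite ?mulr0 ?addr0 ?mul0r ?eqxx.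
Qed.

Lemma comb_map_superder : lam * d = 0 -> superder lam false comb_map.
Proof.
move=> /eqP; rewrite mulf_eq0 => /orP ld0; split.
  by move=> x z; case: x => m; case: z => j; coef_simpl; rewrite ?mulr0 ?addr0 ?eqxx.
move=> x y z; rewrite coef_cat coef_vscale coef_lapply !coef_brl /linext.
case: x => m; case: y => n; case: z => j; coef_simpl; rewrite ?(addrC n m); case_index_eq j;
  rewrite ?eqxx /= /halfint; case: ld0 => /eqP E; rewrite ?E; by field.
Qed.

Lemma comb_map_eq0 : lmap_eq comb_map lzero -> [/\ a = 0, b = 0, c = 0 & d = 0].
Proof.
move=> E0; have coef0 x z : coef (comb_map x) z = 0 by rewrite E0 /coef big_nil.
have one_nz : (1 : C) != 0 by rewrite oner_eq0.
have a0 : a = 0 by move: (coef0 (bL 1) (bL 1)); coef_simpl => E; cancel_by (1 : C) one_nz E.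
have b0 : b = 0 by move: (coef0 (bL 1) (bI 1)); coef_simpl => E; cancel_by (1 : C) one_nz E.
have d0 : d = 0.
  move: (coef0 (bI 0) (bI 0)); coef_simpl => E.
  have two_nz : (2 : C) != 0 by rewrite pnatr_eq0.
  cancel_by (2 : C) two_nz E.
split=> //; move: (coef0 (bG 0) (bH 0)); coef_simpl; rewrite a0 b0 => E.
cancel_by (1 : C) one_nz E.
Qed.

End Combination.

Lemma comb_map_dG (C : numFieldType) (lam : C) : lmap_eq (comb_map lam 0 0 1 0) dG.
Proof.
case=> m [] j; coef_simpl; case: (eqVneq m j) => [->|nmj]; rewrite ?eqxx /= /halfint;
  by field.
Qed.

Lemma comb_map_dD (C : numFieldType) (lam : C) : lmap_eq (comb_map lam 0 0 0 1) dD.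
Proof.
case=> m [] j; coef_simpl; case: (eqVneq m j) => [->|nmj]; rewrite ?eqxx /= /halfint;
  by field.
Qed.

Section DerivationConstraints.
Variables (C : numFieldType) (lam : C) (f g k h al be ga de : int -> C).
Hypothesis Dder : superder lam false (deg0_map f g k h al be ga de).

Let f1 := f 1.
Let g1 := g 1.
Let h0 := h 0.
Let de0 := de 0.
Let be0 := be 0.

(* Folding the local definitions back keeps the atoms seen by [field] in the
   hypotheses and in the statements identical. *)
Ltac bracket_identity x y z :=
  move: (proj2 Dder x y z); rewrite coef_cat coef_vscale coef_lapply !coef_brl /linext;
  coef_simpl; rewrite ?eqxx /= -/f1 -/g1 -/h0 -/de0 -/be0.

Lemma f_linear m : f m = m%:~R * f1.
Proof.
apply: additive_off_diag => {}m n mn; bracket_identity (bL m) (bL n) (bL (m + n)) => E.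
have nz : ((m - n)%:~R : C) != 0 by rewrite intr_eq0 subr_eq0.
cancel_by ((m - n)%:~R : C) nz E.
Qed.

Lemma g_linear m : g m = m%:~R * g1.
Proof.
apply: additive_off_diag => {}m n mn; bracket_identity (bL m) (bL n) (bI (m + n)).
rewrite [n + m]addrC eqxx /= => E.
have nz : ((m - n)%:~R : C) != 0 by rewrite intr_eq0 subr_eq0.
cancel_by ((m - n)%:~R : C) nz E.
Qed.

Lemma k_eq0 m : k m = 0.
Proof.
have k_const x : x != 0 -> k x = k 0.
  move=> nx; bracket_identity (bL x) (bI 0) (bL (x + 0)); rewrite !addr0 => E.
  have nz : ((x - 0)%:~R : C) != 0 by rewrite intr_eq0 subr0.
  cancel_by ((x - 0)%:~R : C) nz E.
have k0 : k 0 = 0.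
  bracket_identity (bI 1) (bI 0) (bI (1 + 0)); rewrite !addr0 k_const // => E.
  have nz : (2 : C) != 0 by rewrite pnatr_eq0.
  cancel_by (2 : C) nz E.
by have [->|nm] := eqVneq m 0; rewrite ?k_const.
Qed.

Lemma h_affine m : h m = h0 + m%:~R * f1.
Proof.
have [->|nm] := eqVneq m 0; first by rewrite mul0r addr0.
bracket_identity (bL m) (bI 0) (bI (m + 0)); rewrite !addr0 !f_linear => E.
have nz : ((m - 0)%:~R : C) != 0 by rewrite intr_eq0 subr0.
cancel_by ((m - 0)%:~R : C) nz E.
Qed.

Lemma ga_eq0 n : ga n = 0.
Proof.
bracket_identity (bI 0) (bH n) (bH (0 + n)); rewrite !add0r k_eq0 => E.
have nz : (2 * (n%:~R + 2^-1) : C) != 0 by rewrite mulf_neq0 ?intr_add_half_neq0 ?pnatr_eq0.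
cancel_by (2 * (n%:~R + 2^-1) : C) nz E.
Qed.

Lemma de_affine n : de n = de0 + n%:~R * f1.
Proof.
have de_shift x : x != 1 -> de x = f x + de0.
  move=> nx; bracket_identity (bL x) (bH 0) (bH (x + 0)); rewrite !addr0 !ga_eq0 => E.
  have nz : ((x - 1)%:~R / 2 : C) != 0.
    by rewrite mulf_neq0 ?invr_eq0 ?pnatr_eq0 // intr_eq0 subr_eq0.
  cancel_by ((x - 1)%:~R / 2 : C) nz E.
have [->|nn] := eqVneq n 1; last by rewrite de_shift // f_linear addrC.
bracket_identity (bL 2) (bH (-1)) (bH (2 + -1)); rewrite (_ : 2 + -1 = 1) // !ga_eq0.
rewrite (@de_shift (-1)) // !f_linear => E.
have nz : (3 / 2 : C) != 0 by rewrite mulf_neq0 ?invr_eq0 ?pnatr_eq0.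
cancel_by (3 / 2 : C) nz E.
Qed.

Lemma al_affine n : al n = de0 + n%:~R * f1 - h0.
Proof.
bracket_identity (bI 0) (bG n) (bH (0 + n)).
rewrite !add0r ?k_eq0 ?ga_eq0 ?de_affine ?h_affine => E.
have nz : (2 * (n%:~R + 2^-1) : C) != 0 by rewrite mulf_neq0 ?intr_add_half_neq0 ?pnatr_eq0.
cancel_by (2 * (n%:~R + 2^-1) : C) nz E.
Qed.

Lemma GG_relation : h0 + f1 = 2 * de0 - 2 * h0.
Proof.
bracket_identity (bG 0) (bG 0) (bI (0 + 0 + 1)); rewrite ?k_eq0 ?h_affine ?al_affine => E.
have nz : (1 : C) != 0 by rewrite oner_eq0.
cancel_by (1 : C) nz E.
Qed.

Lemma lam_h0 : lam * h0 = 0.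
Proof.
bracket_identity (bL 1) (bG 0) (bH (1 + 0)).
rewrite ?k_eq0 ?h_affine ?al_affine ?de_affine ?f_linear ?g_linear ?ga_eq0 => E.
have nz : (2 : C) != 0 by rewrite pnatr_eq0.
cancel_by (2 : C) nz E.
Qed.

Lemma be_affine n : be n = be0 + n%:~R * (2 * g1).
Proof.
have be_up x : x != 0 -> be (1 + x) = be x + 2 * g1.
  move=> nx; bracket_identity (bL 1) (bG x) (bH (1 + x)).
  rewrite ?k_eq0 ?h_affine ?al_affine ?de_affine ?f_linear ?g_linear ?ga_eq0 => E.
  have nz : (x%:~R : C) != 0 by rewrite intr_eq0.
  have /eqP := lam_h0; rewrite mulf_eq0 => /orP[] /eqP lh0; rewrite lh0 in E;
    cancel_by (x%:~R : C) nz E.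
have be_down x : x != -1 -> be (-1 + x) = be x - 2 * g1.
  move=> nx; bracket_identity (bL (-1)) (bG x) (bH (-1 + x)).
  rewrite ?k_eq0 ?h_affine ?al_affine ?de_affine ?f_linear ?g_linear ?ga_eq0 => E.
  have nz : ((x + 1)%:~R : C) != 0 by rewrite intr_eq0 addr_eq0.
  cancel_by ((x + 1)%:~R : C) nz E.
apply: int_arith_prog => {}n; have [->|nn] := eqVneq n 0; last by rewrite addrC be_up.
by have := be_down 1 isT; rewrite addNr add0r => ->; rewrite subrK.
Qed.

Lemma deg0_map_comb : exists a b c d,
  lam * d = 0 /\ lmap_eq (deg0_map f g k h al be ga de) (comb_map lam a b c d).
Proof.
have de0E : de0 = (3 * h0 + f1) / 2.
  have two_nz : (2 : C) != 0 by rewrite pnatr_eq0.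
  have E := GG_relation; cancel_by (2 : C) two_nz E.
(* ad L_0 and ad I_0 send L_m to -m L_m and -m I_m, and partial_D scales I_m by 2. *)
exists (- f1), (- g1), (be0 + f1 * lam - g1), (h0 / 2); split.
  by rewrite mulrA lam_h0 mul0r.
apply: deg0_map_ext => m /=; rewrite ?f_linear ?g_linear ?k_eq0 ?h_affine ?al_affine;
  rewrite ?be_affine ?ga_eq0 ?de_affine ?de0E /halfint; by field.
Qed.

End DerivationConstraints.

Theorem lemma2p7 (C : numClosedFieldType) (lam : C) :
  (forall D : lmap C,
     superder lam false D /\ has_degree 0 D <->
     exists a b c d : C, (lam != 0 -> d = 0) /\
       lmap_eq D (ladd (ladd (lscale a (ad lam (bL 0))) (lscale b (ad lam (bI 0))))
                       (ladd (lscale c dG) (lscale d dD)))) /\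
  (forall a b c d : C, (lam != 0 -> d = 0) ->
     lmap_eq (ladd (ladd (lscale a (ad lam (bL 0))) (lscale b (ad lam (bI 0))))
                   (ladd (lscale c dG) (lscale d dD))) lzero ->
     [/\ lmap_eq (ladd (lscale a (ad lam (bL 0))) (lscale b (ad lam (bI 0)))) lzero,
         lmap_eq (lscale c dG) lzero &
         lmap_eq (lscale d dD) lzero]) /\
  superder lam false dG /\
  (lam = 0 -> superder lam false dD).
Proof.
split; [|split; [|split]].
- move=> D; split.
  + case=> [[Dpar Dbr] Ddeg].
    have ED := even_deg0_map Dpar Ddeg.
    have [a [b [c [d [ld0 EDcomb]]]]] := deg0_map_comb (superder_lmap_eq ED (conj Dpar Dbr)).
    exists a, b, c, d; split.
      by move=> /negbTE nl; move/eqP: ld0; rewrite mulf_eq0 nl => /eqP.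
    exact: lmap_eq_trans ED (lmap_eq_trans EDcomb (lmap_eq_sym (combE _ _ _ _ _))).
  + case=> [a [b [c [d [ld0 ED]]]]].
    have {}ED := lmap_eq_sym (lmap_eq_trans ED (combE lam a b c d)).
    have lam_d : lam * d = 0 by have [->|/ld0 ->] := eqVneq lam 0; rewrite ?mul0r ?mulr0.
    split; first exact: superder_lmap_eq ED (comb_map_superder _ _ _ lam_d).
    by apply: (has_degree_lmap_eq ED); apply: comb_map_degree.
- move=> a b c d _ /(lmap_eq_trans (lmap_eq_sym (combE lam a b c d))).
  case/comb_map_eq0=> -> -> -> ->.
  by split; do ?apply: ladd_eq0; apply: lscale0.
- exact: superder_lmap_eq (comb_map_dG lam) (comb_map_superder 0 0 1 (mulr0 lam)).
- move=> ->; exact: superder_lmap_eq (comb_map_dD 0) (comb_map_superder 0 0 0 (mul0r 1)).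
Qed.
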